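(* Let $G$ be an abelian Hausdorff topological group and $\kappa$ a cardinal. The following are equivalent: (i) $G$ contains a subgroup topologically isomorphic to a direct product (with the Tychonoff product topology) of $\kappa$-many non-trivial topological groups; (ii) $G$ contains a topologically independent absolutely summable set of size $\kappa$.
   Context: All groups are abelian; topological groups are Hausdorff. $A\subseteq G$ is absolutely summable if for every family $\{z_a:a\in A\}$ of integers there is $g\in G$ such that for every neighbourhood $U$ of $0$ there is a finite $F\subseteq A$ with $g-\sum_{a\in E}z_aa\in U$ for every finite $E\subseteq A$ containing $F$. $A$ is topologically independent if $0\notin A$ and for every neighbourhood $W$ of $0$ there is a neighbourhood $U$ of $0$ such that for every finite $F\subseteq A$ and all integers $\{z_a:a\in F\}$, $\sum_{a\in F}z_aa\in U$ implies $z_aa\in W$ for all $a\in F$. *)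

From HB Require Import structures.
From mathcomp Require Import all_boot all_order all_algebra finmap.
From mathcomp Require Import all_classical all_reals all_analysis.
Set Implicit Arguments. Unset Strict Implicit. Unset Printing Implicit Defensive.
Import Order.TTheory GRing.Theory Num.Theory.
Local Open Scope classical_set_scope.
Local Open Scope ring_scope.


(** Abelian (Hausdorff) topological groups are [topologicalZmodType]s
    satisfying [hausdorff_space]. *)

(** [A] is absolutely summable in [G]: for every family of integers
    [(z_a)_{a in A}] (encoded as [z : G -> int], values off [A] irrelevant)
    the net of finite partial sums of [z_a a] converges to some [g]. *)
Definition abs_summable (G : topologicalZmodType) (A : set G) : Prop :=
  forall z : G -> int, exists g : G,
    forall U : set G, nbhs (0 : G) U ->
      exists F : {fset G}, (forall a, a \in F -> A a) /\
        forall E : {fset G}, (forall a, a \in E -> A a) -> (F `<=` E)%fset ->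
          U (g - \sum_(a <- E) a *~ z a).

Definition top_independent (G : topologicalZmodType) (A : set G) : Prop :=
  ~ A 0 /\
  forall W : set G, nbhs (0 : G) W ->
    exists U : set G, nbhs (0 : G) U /\
      forall (F : {fset G}) (z : G -> int), (forall a, a \in F -> A a) ->
        U (\sum_(a <- F) a *~ z a) -> forall a, a \in F -> W (a *~ z a).

(** [f] maps the Tychonoff product [prod_topology H] (with pointwise group
    operations) isomorphically, as a topological group, onto its image in [G]
    (which is then a subgroup of [G] carrying the subspace topology):
    an additive, injective, continuous map that is open onto its image. *)
Definition prod_top_group_embedding (I : Type) (H : I -> topologicalZmodType)
    (G : topologicalZmodType) (f : prod_topology H -> G) : Prop :=
  [/\ forall x y : prod_topology H, f (fun i => x i + y i) = f x + f y,
      injective f,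
      continuous f &
      forall U : set (prod_topology H), open U ->
        exists V : set G, open V /\ f @` U = V `&` range f].

From HB Require Import structures.
From mathcomp Require Import all_boot all_order all_algebra finmap.
From mathcomp Require Import all_classical all_reals all_analysis.
Import Order.TTheory GRing.Theory Num.Theory.
Set Implicit Arguments. Unset Strict Implicit. Unset Printing Implicit Defensive.
Local Open Scope classical_set_scope.
Local Open Scope ring_scope.

(* If f embeds a product of nontrivial groups H_i, choose h_i != 0 in each H_i and
   let a_i be the image under f of the point with h_i at coordinate i and 0 elsewhere.
   The partial sums of sum_i z_i a_i are images of truncations of (z_i h_i)_i, which
   converge to it in the product topology: this is absolute summability. Since f is
   open onto its image, a small such sum has small coordinates: this is topological
   independence.
   Conversely, for an independent absolutely summable A = {b_i}, map (x_i) in the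
   product of the cyclic subgroups <b_i> to the sum of the x_i. Absolute
   summability makes the tails of these sums uniformly small, whence continuity;
   independence shows that a small sum has all its coordinates small, whence
   injectivity and openness onto the image. *)

Section topological_zmodule.
Variable M : topologicalZmodType.
Implicit Types (U V : set M) (x : M).

Lemma nbhs0_split_add U : nbhs (0 : M) U ->
  exists2 V, nbhs (0 : M) V & forall x y, V x -> V y -> U (x + y).
Proof.
move=> U0; have := @add_continuous M (0, 0) U; rewrite /= addr0 => /(_ U0).
case=> -[P Q] /= [P0 Q0] PQ; exists (P `&` Q); first exact: filterI.
by move=> x y [Px _] [_ Qy]; exact: (PQ (x, y)).
Qed.

Lemma nbhs0_split_sub U : nbhs (0 : M) U ->
  exists2 V, nbhs (0 : M) V & forall x y, V x -> V y -> U (x - y).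
Proof.
move=> U0; have := @sub_continuous M (0, 0) U; rewrite /= subrr => /(_ U0).
case=> -[P Q] /= [P0 Q0] PQ; exists (P `&` Q); first exact: filterI.
by move=> x y [Px _] [_ Qy]; exact: (PQ (x, y)).
Qed.

Lemma nbhs0_opp U : nbhs (0 : M) U -> nbhs (0 : M) [set x | U (- x)].
Proof.
by move=> U0; have := @opp_continuous M 0 U; rewrite oppr0 => /(_ U0).
Qed.

Lemma nbhs_translate x U : nbhs x U <-> nbhs (0 : M) [set y | U (x + y)].
Proof.
have shift_cont (a : M) : continuous (fun y : M => a + y).
  move=> y; apply: (@continuous_comp _ _ _ (fun y => (a, y)) (fun p : M * M => p.1 + p.2)).
    by apply: cvg_pair; [exact: cvg_cst | exact: cvg_id].
  exact: add_continuous.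
split => [Ux | U0].
  by apply: (shift_cont x 0 U); rewrite addr0.
have := shift_cont (- x) x [set y | U (x + y)]; rewrite addNr => /(_ U0) xU.
by apply: (filterS _ (xU : nbhs x _)) => y /=; rewrite addNKr.
Qed.

Lemma hausdorff_nbhs0_eq0 : hausdorff_space M ->
  forall x, (forall U, nbhs (0 : M) U -> U x) -> x = 0.
Proof.
move=> hM x x0; apply: hM => U V /nbhs_translate/nbhs0_opp/x0 /= Ux V0.
by exists 0; split; [rewrite -(subrr x) | exact: nbhs_singleton].
Qed.

Lemma nbhs0_big_sum (T : eqType) (s : seq T) U : nbhs (0 : M) U ->
  exists2 V, nbhs (0 : M) V &
    forall v : T -> M, (forall c, c \in s -> V (v c)) -> U (\sum_(c <- s) v c).
Proof.
elim: s U => [|c s IHs] U U0.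
  by exists setT => [|v _]; [exact: filterT | rewrite big_nil; exact: nbhs_singleton].
have [V1 V10 V1U] := nbhs0_split_add U0; have [V2 V20 V2V1] := IHs _ V10.
exists (V1 `&` V2) => [|v vV]; first exact: filterI.
rewrite big_cons; apply: V1U; first by have [] := vV c (mem_head _ _).
by apply: V2V1 => d ds; have [] := vV d; rewrite // in_cons ds orbT.
Qed.

End topological_zmodule.

Section product_zmodule.
Variables (I : Type) (H : I -> zmodType).
Local Notation P := (prod_topology H).

Let add_prod (x y : P) : P := fun i => x i + y i.
Let opp_prod (x : P) : P := fun i => - x i.
Let zero_prod : P := fun i => 0.

Let add_prodA : associative add_prod.
Proof. by move=> x y z; apply: functional_extensionality_dep => i; exact: addrA. Qed.
Let add_prodC : commutative add_prod.
Proof. by move=> x y; apply: functional_extensionality_dep => i; exact: addrC. Qed.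
Let add0_prod : left_id zero_prod add_prod.
Proof. by move=> x; apply: functional_extensionality_dep => i; exact: add0r. Qed.
Let addN_prod : left_inverse zero_prod opp_prod add_prod.
Proof. by move=> x; apply: functional_extensionality_dep => i; exact: addNr. Qed.

HB.instance Definition _ := GRing.isZmodule.Build P add_prodA add_prodC add0_prod addN_prod.

End product_zmodule.

Lemma prod_topology_continuous (X : topologicalType) (I : Type)
    (H : I -> topologicalType) (g : X -> prod_topology H) :
  (forall i, continuous (fun x => g x i)) -> continuous g.
Proof.
move=> gi x; apply/(@cvg_sup (forall i, H i) I
  (fun i => Topological.class (initial_topology (fun f : forall i, H i => f i)))) => i.
exact: (@continuous_comp_initial _ _ _ (fun f : forall i, H i => f i) g (gi i)).
Qed.

Section product_topological_zmodule.
Variables (I : Type) (H : I -> topologicalZmodType).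
Local Notation P := (prod_topology H).

Let proj_cont i : continuous (fun x : P => x i).
Proof. exact: (@proj_continuous {classic I} H i). Qed.

Let sub_prod_continuous : continuous (fun xy : P * P => xy.1 - xy.2).
Proof.
apply: prod_topology_continuous => i xy.
apply: (@continuous_comp _ _ _ (fun xy : P * P => (xy.1 i, xy.2 i))
  (fun ab : H i * H i => ab.1 - ab.2)); last exact: sub_continuous.
apply: cvg_pair.
  apply: (@continuous_comp _ _ _ fst (fun x : P => x i)); [exact: cvg_fst | exact: proj_cont].
apply: (@continuous_comp _ _ _ snd (fun x : P => x i)); [exact: cvg_snd | exact: proj_cont].
Qed.

HB.instance Definition _ :=
  PreTopologicalNmodule_isTopologicalZmodule.Build P sub_prod_continuous.

End product_topological_zmodule.

Section product_boxes.
Variables (I : Type) (H : I -> topologicalType).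
Local Notation P := (prod_topology H).
Local Notation Ic := {classic I}.

(* Only the [V i] with [i \in F] matter; [{classic I}] provides the choice structure
   needed for finite sets of indices of an arbitrary type. *)
Definition box (F : {fset Ic}) (V : forall i, set (H i)) : set P :=
  [set x | forall i : Ic, i \in F -> V i (x i)].

Lemma box_open F V : (forall i, open (V i)) -> open (box F V).
Proof.
move=> oV; rewrite openE => x xV.
apply: (@filter_bigI _ Ic F (fun i => [set y : P | V i (y i)])) => i iF.
by apply: (@proj_continuous Ic H i); apply: open_nbhs_nbhs; split; [exact: oV | exact: xV].
Qed.

Lemma nbhs_box (x : P) A : nbhs x A ->
  exists F V, (forall i, open_nbhs (x i) (V i)) /\ box F V `<=` A.
Proof.
move=> xA.
pose boxes := filter_from
  [set FV : {fset Ic} * (forall i, set (H i)) | forall i, open_nbhs (x i) (FV.2 i)]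
  (fun FV => box FV.1 FV.2).
have boxes_filter : Filter boxes.
  apply: filter_from_filter.
    by exists (fset0, fun _ => setT) => i; split; [exact: openT |].
  move=> [F1 V1] [F2 V2] /= V1x V2x.
  exists ((F1 `|` F2)%fset, fun i => V1 i `&` V2 i) => [i|y /= yV].
    exact: open_nbhsI.
  by split=> i iF; have [] := yV i; rewrite // inE iF ?orbT.
suff /(_ A xA) [[F V] /= Vx VA] : boxes --> x by exists F, V.
apply/(@cvg_sup (forall i, H i) I
  (fun i => Topological.class (initial_topology (fun f : forall i, H i => f i)))) => i.
move=> B; rewrite (@nbhsE (initial_topology (fun f : forall i, H i => f i))).
move=> -[B' [[Q oQ QB'] B'x] B'B].
exists ([fset (i : Ic)]%fset, @dfwith Ic (fun j => set (H j)) (fun _ => setT) i Q) => /=.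
  move=> j; have [<-|ij] := eqVneq (i : Ic) j; last first.
    by rewrite dfwithout //; split; [exact: openT |].
  by rewrite dfwithin; split => //; move: B'x; rewrite -QB'.
move=> y yQ; apply: B'B; rewrite -QB' /=.
by have := yQ i; rewrite inE eqxx dfwithin; exact.
Qed.

End product_boxes.

Section disjoint_fsets.
Variable K : choiceType.
Implicit Types (E F : {fset K}).

Lemma big_fsetU_disjoint (R : zmodType) (t : K -> R) E F : [disjoint E & F]%fset ->
  \sum_(c <- (E `|` F)%fset) t c = \sum_(c <- E) t c + \sum_(c <- F) t c.
Proof.
move=> /fdisjointP EF; rewrite (big_fsetID _ (mem E)) /=; congr (_ + _).
  by apply: eq_fbigl => c; rewrite !inE; case: (c \in E); rewrite ?andbF.
apply: eq_fbigl => c; rewrite !inE.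
by case: (boolP (c \in E)) => [/EF/negPf -> | _] //=; rewrite andbT.
Qed.

Lemma disjoint_fset_sequence (Q : {fset K} -> Prop) :
  (forall F, exists2 E, [disjoint E & F]%fset & Q E) ->
  exists E : nat -> {fset K},
    (forall n, Q (E n)) /\ forall m n, (m < n)%N -> [disjoint E m & E n]%fset.
Proof.
move=> nextE; have [next nextP] : {next : {fset K} -> {fset K} &
    forall F, [disjoint next F & F]%fset /\ Q (next F)}.
  by apply: (@choice _ _ (fun F E => [disjoint E & F]%fset /\ Q E)) => F;
     have [E] := nextE F; exists E.
pose S n := iter n (fun F => (F `|` next F)%fset) fset0.
have S_mono m n : (m <= n)%N -> (S m `<=` S n)%fset.
  elim: n => [|n IHn]; first by rewrite leqn0 => /eqP ->.
  rewrite leq_eqVlt ltnS => /orP[/eqP -> //|/IHn].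
  by move=> /fsubset_trans; apply; exact: fsubsetUl.
exists (fun n => next (S n)); split => [n|m n mn]; first by case: (nextP (S n)).
rewrite fdisjoint_sym; apply: fdisjointWr (proj1 (nextP (S n))).
exact: fsubset_trans (fsubsetUr (S m) _) (S_mono m.+1 n mn).
Qed.

Lemma disjoint_fset_avoid (E : nat -> {fset K}) F :
  (forall m n, (m < n)%N -> [disjoint E m & E n]%fset) ->
  exists m, [disjoint E m & F]%fset.
Proof.
move=> disjE; apply: contrapT => /forallNP meetE.
suff: forall n F, (forall m, (m < n)%N -> ~ [disjoint E m & F]%fset) -> (n <= #|` F|)%N.
  by move=> /(_ (#|` F|).+1 F (fun m _ => meetE m)); rewrite ltnn.
elim=> // n IHn B meetB.
have /negP/fset0Pn[c] := meetB n (ltnSn n); rewrite inE => /andP[cEn cB].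
suff: (n <= #|` (B `\ c)%fset|)%N by rewrite (cardfsD1 c B) cB.
apply: IHn => m mn /fdisjointP mBc; apply: (meetB m (ltnW mn)).
apply/fdisjointP => a aEm; have := mBc a aEm; rewrite !inE negb_and negbK.
case/orP => [/eqP ac|] //; rewrite ac in aEm.
by have /fdisjointP/(_ c aEm) := disjE m n mn; rewrite cEn.
Qed.

Lemma disjoint_fset_glue (T : Type) (d : T) (E : nat -> {fset K}) (z : nat -> K -> T) :
  (forall m n, (m < n)%N -> [disjoint E m & E n]%fset) ->
  exists z' : K -> T, forall n c, c \in E n -> z' c = z n c.
Proof.
move=> disjE.
have E_inj m n c : c \in E m -> c \in E n -> m = n.
  move=> cm cn; have [mn|nm|//] := ltngtP m n.
    by have /fdisjointP/(_ c cm) := disjE m n mn; rewrite cn.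
  by have /fdisjointP/(_ c cn) := disjE n m nm; rewrite cm.
exists (fun c => if pselect (exists n, c \in E n) is left e then z (projT1 (cid e)) c else d).
move=> n c cn; case: pselect => [e|[]]; last by exists n.
by case: (cid e) => m /= /E_inj/(_ cn) ->.
Qed.

End disjoint_fsets.

Section summable.
Variables (G : topologicalZmodType) (A : set G).

Definition summable_to (t : G -> G) (g : G) : Prop :=
  forall U : set G, nbhs (0 : G) U ->
    exists F : {fset G}, (forall c, c \in F -> A c) /\
      forall E : {fset G}, (forall c, c \in E -> A c) -> (F `<=` E)%fset ->
        U (g - \sum_(c <- E) t c).

Lemma summable_to_unique t g1 g2 : hausdorff_space G ->
  summable_to t g1 -> summable_to t g2 -> g1 = g2.
Proof.
move=> hG tg1 tg2; apply/eqP; rewrite -subr_eq0; apply/eqP.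
apply: hausdorff_nbhs0_eq0 => // U U0; have [V V0 VU] := nbhs0_split_sub U0.
have [F1 [F1A F1P]] := tg1 _ V0; have [F2 [F2A F2P]] := tg2 _ V0.
have F12A c : c \in (F1 `|` F2)%fset -> A c by case/fsetUP => [/F1A|/F2A].
have := VU _ _ (F1P _ F12A (fsubsetUl _ _)) (F2P _ F12A (fsubsetUr _ _)).
by rewrite opprB addrA subrK.
Qed.

Lemma summable_toD t1 t2 g1 g2 : summable_to t1 g1 -> summable_to t2 g2 ->
  summable_to (fun c => t1 c + t2 c) (g1 + g2).
Proof.
move=> tg1 tg2 U U0; have [V V0 VU] := nbhs0_split_add U0.
have [F1 [F1A F1P]] := tg1 _ V0; have [F2 [F2A F2P]] := tg2 _ V0.
exists (F1 `|` F2)%fset; split=> [c|E EA FE]; first by case/fsetUP => [/F1A|/F2A].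
have := VU _ _ (F1P _ EA (fsubset_trans (fsubsetUl _ _) FE))
               (F2P _ EA (fsubset_trans (fsubsetUr _ _) FE)).
by rewrite big_split /= opprD addrACA.
Qed.

Lemma abs_summable_tail : abs_summable A ->
  forall W : set G, nbhs (0 : G) W ->
  exists F0 : {fset G}, (forall c, c \in F0 -> A c) /\
    forall (E : {fset G}) (z : G -> int), (forall c, c \in E -> A c) ->
      [disjoint E & F0]%fset -> W (\sum_(c <- E) c *~ z c).
Proof.
(* Otherwise infinitely many pairwise disjoint blocks with sums outside W glue into
   a single family of coefficients whose partial sums do not converge. *)
move=> summA W W0; apply: contrapT => noF0.
pose Q (E : {fset G}) := (forall c, c \in E -> A c) /\
  exists z : G -> int, ~ W (\sum_(c <- E) c *~ z c).
have [E [QE disjE]] : exists E : nat -> {fset G},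
    (forall n, Q (E n)) /\ forall m n, (m < n)%N -> [disjoint E m & E n]%fset.
  apply: disjoint_fset_sequence => F; apply: contrapT => noE; apply: noF0.
  exists [fset c in F | `[< A c >]]%fset; split=> [c|E z EA EF].
    by rewrite inE => /andP[_ /asboolP].
  apply: contrapT => notW; apply: noE; exists E; last by split => //; exists z.
  apply/fdisjointP => c cE; apply/negP => cF.
  by move: (fdisjointP EF c cE); rewrite !inE cF asboolT //; exact: EA.
have [z zP] : {z : nat -> G -> int & forall n, ~ W (\sum_(c <- E n) c *~ z n c)}.
  by apply: (@choice _ _ (fun n z => ~ W (\sum_(c <- E n) c *~ z c))) => n; case: (QE n).
have [z' z'E] := disjoint_fset_glue 0 z disjE.
have [V V0 VW] := nbhs0_split_sub W0.
have [g /(_ V V0)[F0 [F0A F0P]]] := summA z'.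
have [m EmF0] := disjoint_fset_avoid F0 disjE.
have F0EmA c : c \in (F0 `|` E m)%fset -> A c by case/fsetUP => [/F0A|/(QE m).1].
apply: (zP m); have := VW _ _ (F0P F0 F0A (fsubset_refl _)) (F0P _ F0EmA (fsubsetUl _ _)).
rewrite big_fsetU_disjoint 1?fdisjoint_sym // opprB addrC addrA subrK.
rewrite [X in X - _]addrC addrK; congr W.
by apply: eq_fbigr => c cEm; rewrite (z'E m c cEm).
Qed.

End summable.

Lemma morphD_nmod_morphism (U V : zmodType) (f : U -> V) :
  {morph f : x y / x + y} -> nmod_morphism f.
Proof. by move=> fD; split=> //; apply: (addrI (f 0)); rewrite -fD !addr0. Qed.

Section additive_topology.
Variables (M N : topologicalZmodType) (f : {additive M -> N}).

Lemma additive_continuous :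
  (forall W, nbhs (0 : N) W -> nbhs (0 : M) (f @^-1` W)) -> continuous f.
Proof.
move=> f0 x W /nbhs_translate/f0 xW; apply/nbhs_translate.
by apply: filterS xW => y /=; rewrite raddfD.
Qed.

Lemma additive_open_onto_range :
  (forall D, nbhs (0 : M) D -> exists2 U, nbhs (0 : N) U & forall x, U (f x) -> D x) ->
  forall O : set M, open O -> exists V : set N, open V /\ f @` O = V `&` range f.
Proof.
move=> f0 O oO.
have [W WP] : {W : M -> set N & forall x, O x ->
    [/\ open (W x), W x 0 & forall y, W x (f y - f x) -> O y]}.
  apply: (@choice _ _ (fun x Wx => O x ->
    [/\ open Wx, Wx 0 & forall y, Wx (f y - f x) -> O y])) => x.
  have [Ox|nOx] := pselect (O x); last by exists setT => /nOx.
  have /nbhs_translate/f0[U U0 UO] : nbhs x O by exact: open_nbhs_nbhs.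
  move: U0; rewrite nbhsE => -[Wx [oWx Wx0] WxU].
  exists Wx => _; split=> // y /WxU; rewrite -raddfB => /UO.
  by rewrite /= subrKC.
exists [set w | exists2 x, O x & W x (w - f x)]; split.
  rewrite openE => w [x Ox Wxw]; have [oWx _ _] := WP x Ox.
  apply/nbhs_translate; have /nbhs_translate := open_nbhs_nbhs (conj oWx Wxw).
  by apply: filterS => y Wxy; exists x => //; rewrite addrAC.
apply/seteqP; split=> [_ [x Ox <-]|w [[x Ox Wxw] [y _ yw]]].
  by split; [exists x => //; rewrite subrr; case: (WP x Ox) | exists x].
by exists y => //; have [_ _] := WP x Ox; apply; rewrite yw.
Qed.

End additive_topology.

Definition coord_inj (I : Type) (H : I -> zmodType) (i : I) : H i -> prod_topology H :=
  @dfwith {classic I} H (0 : prod_topology H) i.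
Arguments coord_inj {I H} i.

Section coordinates.
Variables (I : Type) (H : I -> zmodType).
Local Notation P := (prod_topology H).
Local Notation Ic := {classic I}.

Lemma prod_addE (x y : P) i : (x + y) i = x i + y i. Proof. by []. Qed.
Lemma prod_oppE (x : P) i : (- x) i = - x i. Proof. by []. Qed.

Lemma coord_inj_in i (v : H i) : coord_inj i v i = v. Proof. exact: dfwithin. Qed.
Lemma coord_inj_out i (v : H i) j : (i : Ic) != j -> coord_inj i v j = 0.
Proof. exact: dfwithout. Qed.

Lemma coord_inj_is_nmod_morphism (i : I) : nmod_morphism (@coord_inj I H i).
Proof.
apply: morphD_nmod_morphism => v w; apply: functional_extensionality_dep => j.
rewrite prod_addE; have [<-|ij] := eqVneq (i : Ic) j; first by rewrite !coord_inj_in.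
by rewrite !coord_inj_out // addr0.
Qed.

HB.instance Definition _ (i : I) :=
  GRing.isNmodMorphism.Build (H i) P (@coord_inj I H i) (coord_inj_is_nmod_morphism i).

Definition restrict (p : pred I) (x : P) : P := fun j => if p j then x j else 0.

End coordinates.

Section product_basis.
Variables (G : topologicalZmodType) (I : Type) (H : I -> topologicalZmodType).
Local Notation P := (prod_topology H).
Local Notation Ic := {classic I}.
Variables (f : {additive P -> G}) (h : forall i, H i).
Hypotheses (f_inj : injective f) (h_neq0 : forall i, h i != 0).

Definition basis_point (i : I) : G := f (coord_inj i (h i)).

Lemma basis_point_inj : injective basis_point.
Proof.
move=> i j /f_inj /(congr1 (fun x : P => x i)); rewrite coord_inj_in.
have [-> //|ji] := eqVneq (j : Ic) i.
by rewrite coord_inj_out // => /eqP; rewrite (negbTE (h_neq0 i)).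
Qed.

Lemma basis_point_neq0 i : basis_point i != 0.
Proof.
apply: contra (h_neq0 i) => /eqP; rewrite /basis_point -(raddf0 f) => /f_inj.
by move=> /(congr1 (fun x : P => x i)); rewrite coord_inj_in => ->.
Qed.

Definition basis_coeffs (z : G -> int) : P := fun i => h i *~ z (basis_point i).

Lemma sum_basis_points (z : G -> int) (s : seq G) : uniq s ->
    (forall c, c \in s -> range basis_point c) ->
  \sum_(c <- s) c *~ z c = f (restrict [pred j | basis_point j \in s] (basis_coeffs z)).
Proof.
elim: s => [_ _|c s IHs /andP[cs us] sB].
  by rewrite big_nil -(raddf0 f).
rewrite big_cons IHs // => [|d ds]; last by apply: sB; rewrite in_cons ds orbT.
have [i _ ci] := sB c (mem_head _ _); subst c.
rewrite /basis_point -!raddfMz -raddfD; congr (f _).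
apply: functional_extensionality_dep => j; rewrite prod_addE /restrict /= in_cons.
have [<-|ij] := eqVneq (i : Ic) j; first by rewrite coord_inj_in eqxx (negbTE cs) addr0.
rewrite coord_inj_out // add0r.
have [/basis_point_inj ji|//] := eqVneq (basis_point j) (basis_point i).
by rewrite ji eqxx in ij.
Qed.

Hypothesis f_cont : continuous f.

Lemma nbhs0_preimage (W : set G) : nbhs (0 : G) W -> nbhs (0 : P) (f @^-1` W).
Proof. by move=> W0; apply: f_cont; rewrite raddf0. Qed.

Lemma basis_points_abs_summable : abs_summable (range basis_point).
Proof.
move=> z; exists (f (basis_coeffs z)) => U /nbhs0_preimage/nbhs_box[F [V [V0 VU]]].
exists [fset basis_point i | i : Ic in F]%fset.
split=> [_ /imfsetP[i _ ->]|E EB FE]; first by exists i.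
rewrite sum_basis_points ?fset_uniq // -raddfB; apply: VU => i iF.
have iE : basis_point i \in E by apply: (fsubsetP FE); exact: in_imfset.
by rewrite prod_addE prod_oppE /restrict /= iE subrr; case: (V0 i).
Qed.

Hypothesis f_open : forall O : set P, open O ->
  exists V : set G, open V /\ f @` O = V `&` range f.

Lemma basis_points_top_independent : top_independent (range basis_point).
Proof.
split=> [[i _ /eqP]|W /nbhs0_preimage/nbhs_box[F [V [V0 VW]]]].
  by rewrite (negbTE (basis_point_neq0 i)).
have [B [oB fboxE]] := f_open (box_open F (fun i => (V0 i).1)).
have box0 : box F V 0 by move=> i _; exact: (V0 i).2.
have [B0 _] : (B `&` range f) 0 by rewrite -fboxE -(raddf0 f); exists 0.
exists B; split=> [|E z EB]; first exact: open_nbhs_nbhs.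
rewrite sum_basis_points ?fset_uniq //; set x := restrict _ _ => fxB c cE.
have [i _ ci] := EB c cE; subst c.
have [y ybox /f_inj yx] : (f @` box F V) (f x) by rewrite fboxE; split=> //; exists x.
rewrite /basis_point -!raddfMz; apply: VW => j jF.
have [ij|ij] := eqVneq (i : Ic) j; last by rewrite /= coord_inj_out //; case: (V0 j).
by subst j; rewrite /= coord_inj_in; have := ybox i jF; rewrite yx /x /restrict /= cE.
Qed.

End product_basis.

Section subgroup_topology.
Variables (G : topologicalZmodType) (S : zmodClosed G).

Record subgroup := Subgroup { sgval :> G; sgvalP : sgval \in S }.

HB.instance Definition _ := [isSub for sgval].
HB.instance Definition _ := [Choice of subgroup by <:].
HB.instance Definition _ := [SubChoice_isSubZmodule of subgroup by <:].
HB.instance Definition _ := Topological.copy subgroup (initial_topology sgval).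

Lemma sgval_continuous : continuous sgval.
Proof. exact: initial_continuous. Qed.

Let sub_subgroup_continuous :
  continuous (fun xy : subgroup * subgroup => xy.1 - xy.2).
Proof.
apply: continuous_comp_initial => xy.
apply: (@continuous_comp _ _ _ (fun xy : subgroup * subgroup => (sgval xy.1, sgval xy.2))
  (fun ab : G * G => ab.1 - ab.2)); last exact: sub_continuous.
apply: cvg_pair.
  by apply: (@continuous_comp _ _ _ fst sgval); [exact: cvg_fst | exact: sgval_continuous].
by apply: (@continuous_comp _ _ _ snd sgval); [exact: cvg_snd | exact: sgval_continuous].
Qed.

HB.instance Definition _ :=
  PreTopologicalNmodule_isTopologicalZmodule.Build subgroup sub_subgroup_continuous.

Lemma subgroup_hausdorff : hausdorff_space G -> hausdorff_space subgroup.
Proof.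
move=> hG x y xy; apply: val_inj; apply: hG => U V Ux Vy.
by have [z [Uz Vz]] := xy _ _ (sgval_continuous Ux) (sgval_continuous Vy); exists (sgval z).
Qed.

Lemma nbhs_subgroup (x : subgroup) (V : set subgroup) : nbhs x V ->
  exists2 Q : set G, nbhs (sgval x) Q & forall y : subgroup, Q (sgval y) -> V y.
Proof.
rewrite (@nbhsE (initial_topology sgval)) => -[B [[Q oQ QB] Bx] BV].
exists Q => [|y Qy]; last by apply: BV; rewrite -QB.
by apply: open_nbhs_nbhs; split=> //; move: Bx; rewrite -QB.
Qed.

End subgroup_topology.

Definition multiples (G : zmodType) (a : G) : {pred G} :=
  fun x => `[< exists n : int, x = a *~ n >].

Lemma multiples_zmod_closed (G : zmodType) (a : G) : zmod_closed (multiples a).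
Proof.
split=> [|_ _ /asboolP[m ->] /asboolP[n ->]]; apply/asboolP.
  by exists 0; rewrite mulr0z.
by exists (m - n); rewrite mulrzBr.
Qed.

HB.instance Definition _ (G : zmodType) (a : G) :=
  GRing.isZmodClosed.Build G (multiples a) (multiples_zmod_closed a).

Lemma multiples_self (G : zmodType) (a : G) : a \in multiples a.
Proof. by apply/asboolP; exists 1; rewrite mulr1z. Qed.

Section sum_embedding.
Variables (G : topologicalZmodType) (I : Type) (b : I -> G).
Hypotheses (b_inj : injective b) (b_summable : abs_summable (range b)).
Local Notation A := (range b).
Local Notation Ic := {classic I}.

Definition cyclic_factor (i : I) : topologicalZmodType := subgroup (multiples (b i)).
Local Notation P := (prod_topology cyclic_factor).

Definition series_term (x : P) (c : G) : G :=
  if pselect (exists i, b i = c) is left e then sgval (x (projT1 (cid e))) else 0.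

Lemma series_term_point x i : series_term x (b i) = sgval (x i).
Proof.
rewrite /series_term; case: pselect => [e|[]]; last by exists i.
by case: (cid e) => j /= /b_inj ->.
Qed.

Lemma series_termD x y c :
  series_term (x + y) c = series_term x c + series_term y c.
Proof. by rewrite /series_term; case: pselect => // _; rewrite addr0. Qed.

Lemma series_term_multiple x c : exists n : int, series_term x c = c *~ n.
Proof.
rewrite /series_term; case: pselect => [[i bi] /=|_]; last by exists 0; rewrite mulr0z.
case: (cid _) => j /= bj; case: (x j) => y /= /asboolP[n ->].
by exists n; rewrite bj.
Qed.

Definition series_coeff x c : int := projT1 (cid (series_term_multiple x c)).

Lemma series_termE x c : series_term x c = c *~ series_coeff x c.
Proof. exact: (projT2 (cid (series_term_multiple x c))). Qed.

Lemma series_summable x : exists g, summable_to A (series_term x) g.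
Proof.
have [g gP] := b_summable (series_coeff x); exists g => U /gP[F [FA FP]].
by exists F; split=> // E EA FE; under eq_bigr do rewrite series_termE; exact: FP.
Qed.

Definition prod_sum (x : P) : G := projT1 (cid (series_summable x)).

Lemma prod_sumP x : summable_to A (series_term x) (prod_sum x).
Proof. exact: (projT2 (cid (series_summable x))). Qed.

Hypothesis hG : hausdorff_space G.

Lemma prod_sum_is_nmod_morphism : nmod_morphism prod_sum.
Proof.
apply: morphD_nmod_morphism => x y; apply: (summable_to_unique hG (prod_sumP _)).
rewrite (_ : series_term (x + y) = fun c => series_term x c + series_term y c).
  exact: summable_toD (prod_sumP x) (prod_sumP y).
by apply: funext => c; exact: series_termD.
Qed.

HB.instance Definition _ :=
  GRing.isNmodMorphism.Build P G prod_sum prod_sum_is_nmod_morphism.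

Lemma series_term_nbhs0 c (V : set G) : A c -> nbhs (0 : G) V ->
  nbhs (0 : P) [set x | V (series_term x c)].
Proof.
move=> [i _ <-] V0; under eq_set do rewrite series_term_point.
exact: (@proj_continuous Ic cyclic_factor i (0 : P) _
  (@sgval_continuous G (multiples (b i)) 0 V V0)).
Qed.

Lemma prod_sum_nbhs0 (W : set G) : nbhs (0 : G) W -> nbhs (0 : P) (prod_sum @^-1` W).
Proof.
move=> W0; have [W1 W10 W1W] := nbhs0_split_add W0.
have [W2 W20 W2W1] := nbhs0_split_add W10.
have W21 w : W2 w -> W1 w.
  by move=> W2w; rewrite -[w]addr0; exact: W2W1 (nbhs_singleton W20).
have [F0 [F0A F0tail]] := abs_summable_tail b_summable W20.
have [V V0 VW2] := nbhs0_big_sum F0 W20.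
have : nbhs (0 : P) (\bigcap_(c in [set` F0]) [set x | V (series_term x c)]).
  by apply: filter_bigI => c /F0A cA; exact: series_term_nbhs0.
apply: filterS => x xV; have [F [FA FP]] := prod_sumP x W20.
pose E := (F0 `|` (F `\` F0))%fset.
have EA c : c \in E -> A c by rewrite !inE => /orP[/F0A|/andP[_ /FA]].
have FE : (F `<=` E)%fset.
  by apply/fsubsetP => c cF; rewrite !inE cF andbT orbN.
have disjF0 : [disjoint F0 & F `\` F0]%fset.
  by apply/fdisjointP => c cF0; rewrite !inE cF0.
have := FP E EA FE; rewrite big_fsetU_disjoint // => rest.
rewrite /= -[prod_sum x](subrK (\sum_(c <- F0) series_term x c +
  \sum_(c <- (F `\` F0)%fset) series_term x c)).
apply: W1W; first exact: W21 rest.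
apply: W2W1; first by apply: VW2 => c cF0; exact: xV.
under eq_bigr do rewrite series_termE.
apply: F0tail; last by rewrite fdisjoint_sym.
by move=> c; rewrite !inE => /andP[_ /FA].
Qed.

Lemma prod_sum_continuous : continuous prod_sum.
Proof. exact/additive_continuous/prod_sum_nbhs0. Qed.

Hypothesis b_indep : top_independent A.

Lemma prod_sum_coords_small (W : set G) : nbhs (0 : G) W ->
  exists2 U : set G, nbhs (0 : G) U &
    forall x, U (prod_sum x) -> forall i, W (sgval (x i)).
Proof.
move=> /b_indep.2[U [U0 UW]]; have [V V0 VU] := nbhs0_split_sub U0.
exists V => // x Vx i; have [F [FA FP]] := prod_sumP x V0.
have EA c : c \in (F `|` [fset b i])%fset -> A c.
  by case/fsetUP => [/FA //|]; rewrite inE => /eqP ->; exists i.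
have := VU _ _ Vx (FP _ EA (fsubsetUl _ _)); rewrite opprB addrC subrK.
under eq_bigr do rewrite series_termE.
move=> /(UW _ _ EA)/(_ (b i)); rewrite -series_termE series_term_point; apply.
by rewrite !inE eqxx orbT.
Qed.

Lemma prod_sum_inj : injective prod_sum.
Proof.
move=> x y /eqP; rewrite -subr_eq0 -raddfB => /eqP xy0.
apply/eqP; rewrite -subr_eq0; apply/eqP/functional_extensionality_dep => i.
apply: val_inj; apply: hausdorff_nbhs0_eq0 => // W /prod_sum_coords_small[U U0 UW].
by apply: UW; rewrite xy0; exact: nbhs_singleton.
Qed.

Lemma prod_sum_nbhs0_pullback (D : set P) : nbhs (0 : P) D ->
  exists2 U : set G, nbhs (0 : G) U & forall x, U (prod_sum x) -> D x.
Proof.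
move=> /nbhs_box[F [V [V0 VD]]].
have [Q QP] : {Q : I -> set G & forall i, nbhs (0 : G) (Q i) /\
    forall y : cyclic_factor i, Q i (sgval y) -> V i y}.
  apply: (@choice _ _ (fun i Qi => nbhs (0 : G) Qi /\
    forall y : cyclic_factor i, Qi (sgval y) -> V i y)) => i.
  by have [Qi Qi0 QiV] := nbhs_subgroup (open_nbhs_nbhs (V0 i)); exists Qi.
have /prod_sum_coords_small[U U0 UQ] : nbhs (0 : G) (\bigcap_(i in [set` F]) Q i).
  by apply: filter_bigI => i _; case: (QP i).
by exists U => // x /UQ xQ; apply: VD => i iF; apply: (QP i).2; exact: xQ.
Qed.

Lemma prod_sum_embedding : prod_top_group_embedding prod_sum.
Proof.
split; [exact: raddfD | exact: prod_sum_inj | exact: prod_sum_continuous |].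
exact/additive_open_onto_range/prod_sum_nbhs0_pullback.
Qed.

End sum_embedding.

Lemma card_eq_range (T I : Type) (A : set T) :
  (A #= [set: I])%card -> exists b : I -> T, injective b /\ A = range b.
Proof.
rewrite card_eq_sym => /card_bijP[g [g' gK g'K]].
exists (fun i => val (g (SigSub (in_setT i)))); split.
  by move=> i j /val_inj/(can_inj gK)/(congr1 val).
apply/seteqP; split=> [c Ac|_ [i _ <-]]; last exact: set_valP.
exists (val (g' (SigSub (mem_set Ac)))) => //.
by rewrite (_ : SigSub _ = g' (SigSub (mem_set Ac))) ?g'K //; exact: val_inj.
Qed.

Theorem corollary7p3 (G : topologicalZmodType) (hG : hausdorff_space G)
    (I : Type) :
  (exists (H : I -> topologicalZmodType) (f : prod_topology H -> G),
      (forall i, hausdorff_space (H i)) /\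
      (forall i, exists h : H i, h != 0) /\
      prod_top_group_embedding f)
  <->
  (exists A : set G, top_independent A /\ abs_summable A /\ (A #= [set: I])%card).
Proof.
split=> [[H [f [_ [H_nontrivial [fD f_inj f_cont f_open]]]]]|].
  pose h i := projT1 (cid (H_nontrivial i)).
  have h_neq0 i : h i != 0 := projT2 (cid (H_nontrivial i)).
  pose fA : {additive prod_topology H -> G} :=
    HB.pack f (GRing.isNmodMorphism.Build _ _ f (morphD_nmod_morphism fD)).
  exists (range (basis_point fA h)); split.
    exact: (basis_points_top_independent (f := fA) f_inj h_neq0 f_cont f_open).
  split; first exact: (basis_points_abs_summable (f := fA) f_inj h_neq0 f_cont).
  apply: inj_card_eq => i j _ _; exact: (basis_point_inj (f := fA) f_inj h_neq0).
move=> [A [A_indep [A_summable /card_eq_range[b [b_inj bA]]]]]; subst A.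
exists (cyclic_factor b), (prod_sum A_summable); split=> [i|].
  exact: subgroup_hausdorff.
split=> [i|]; last exact: prod_sum_embedding.
exists (Subgroup (multiples_self (b i))); apply/eqP => /(congr1 val) /= bi0.
by apply: A_indep.1; exists i.
Qed.
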